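(* Let $A,B,C\in\mathrm{End}(V)$. Then $A,B,C$ is an LR triple on $V$ if and only if: (i) each of $A,B,C$ is Nil; (ii) the flag $(A^{d-i}V)_{i=0}^d$ is raised by $B$ and by $C$; (iii) the flag $(B^{d-i}V)_{i=0}^d$ is raised by $C$ and by $A$; (iv) the flag $(C^{d-i}V)_{i=0}^d$ is raised by $A$ and by $B$.
   Context: Let $V$ be a vector space over a field $\mathbb F$ with $\dim V=d+1$. $X\in\mathrm{End}(V)$ is Nil if $X^{d+1}=0$ and $X^d\ne0$ (then $(X^{d-i}V)_{i=0}^d$ is a flag). A flag on $V$ is a sequence $(U_i)_{i=0}^d$ of subspaces with $\dim U_i=i+1$ and $U_{i-1}\subseteq U_i$. $X$ raises the flag if $U_i+XU_i=U_{i+1}$ for $0\le i\le d-1$. A decomposition of $V$ is a sequence $(V_i)_{i=0}^d$ of one-dimensional subspaces with $V=\bigoplus V_i$; $X$ lowers it if $XV_i=V_{i-1}$ ($1\le i\le d$), $XV_0=0$; raises it if $XV_i=V_{i+1}$ ($0\le i\le d-1$), $XV_d=0$. An ordered pair $X,Y$ is an LR pair if some decomposition is lowered by $X$ and raised by $Y$. An LR triple on $V$ is $A,B,C$ such that every ordered pair of distinct elements among $A,B,C$ is an LR pair on $V$. *)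

From HB Require Import structures.
From mathcomp Require Import all_boot all_order all_algebra.
Set Implicit Arguments. Unset Strict Implicit. Unset Printing Implicit Defensive.
Import GRing.Theory.
Local Open Scope ring_scope.
Local Open Scope vspace_scope.

Section LRDefs.
Variables (F : fieldType) (vT : vectType F).

Definition lpow (X : 'End(vT)) (n : nat) : 'End(vT) :=
  iter n (fun f => (X \o f)%VF) \1%VF.

(* X is Nil (relative to dim V = d+1): X^{d+1} = 0 and X^d <> 0 *)
Definition NilX (d : nat) (X : 'End(vT)) : Prop :=
  lpow X d.+1 = (0 : 'End(vT))%R /\ lpow X d <> (0 : 'End(vT))%R.

Definition flag_of (d : nat) (X : 'End(vT)) (i : nat) : {vspace vT} :=
  (lpow X (d - i) @: fullv)%VS.

Definition raises_flag (d : nat) (X : 'End(vT)) (U : nat -> {vspace vT}) : Prop :=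
  forall i, (i < d)%N -> (U i + X @: U i)%VS = U i.+1.

Definition is_decomposition (d : nat) (Vs : nat -> {vspace vT}) : Prop :=
  (forall i, (i <= d)%N -> \dim (Vs i) = 1%N) /\
  directv (\sum_(i < d.+1) Vs i) /\
  (\sum_(i < d.+1) Vs i)%VS = fullv.

Definition lowers_dec (d : nat) (X : 'End(vT)) (Vs : nat -> {vspace vT}) : Prop :=
  (forall i, (1 <= i <= d)%N -> (X @: Vs i)%VS = Vs i.-1) /\
  (X @: Vs 0%N)%VS = 0%VS.

Definition raises_dec (d : nat) (X : 'End(vT)) (Vs : nat -> {vspace vT}) : Prop :=
  (forall i, (i < d)%N -> (X @: Vs i)%VS = Vs i.+1) /\
  (X @: Vs d)%VS = 0%VS.

Definition LR_pair (d : nat) (X Y : 'End(vT)) : Prop :=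
  exists Vs : nat -> {vspace vT},
    is_decomposition d Vs /\ lowers_dec d X Vs /\ raises_dec d Y Vs.

Definition LR_triple (d : nat) (A B C : 'End(vT)) : Prop :=
  (LR_pair d A B /\ LR_pair d B A) /\ (LR_pair d A C /\ LR_pair d C A) /\
  (LR_pair d B C /\ LR_pair d C B).

End LRDefs.

From HB Require Import structures.
From mathcomp Require Import all_boot all_order all_algebra.
From mathcomp Require Import zify.
Set Implicit Arguments. Unset Strict Implicit. Unset Printing Implicit Defensive.
Import GRing.Theory.
Local Open Scope ring_scope.
Local Open Scope vspace_scope.

(* For an LR pair [X, Y] with decomposition [(V_i)], induction on [k] gives
   [X^k V = V_0 + ... + V_(d-k)]; hence [X] is Nil and [Y] raises that flag.
   Conversely, let [u] span [X^d V] and take [V_j := <[Y^j u]>].  As [Y] raises the flag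
   of [X], [X^(d-i) V = V_0 + ... + V_i], which makes [(V_j)] a decomposition raised
   by [Y].  As [X] raises the flag of [Y], [X] maps [V_(m+1)] into
   [X^(d-m) V :&: Y^m V = V_m], and not to [0] by a dimension count.  The triple
   statement is the pair statement for each of the six ordered pairs. *)

Lemma decreasing_chain_subn (f : nat -> nat) n :
  f 0%N = n -> f n = 0%N -> (forall k, (k < n)%N -> (f k.+1 < f k)%N) ->
  forall k, (k <= n)%N -> f k = (n - k)%N.
Proof.
move=> f0 fn fS.
have drop m : (m <= n)%N -> forall k, (k <= m)%N -> (f m + (m - k) <= f k)%N.
  elim: m => [|m IH] hm k; first by rewrite leqn0 => /eqP->; rewrite subnn addn0.
  rewrite leq_eqVlt => /orP [/eqP->|hk]; first by rewrite subnn addn0.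
  have := fS m hm; have := IH (ltnW hm) k hk; lia.
move=> k hk; have := drop n (leqnn n) k hk; have := drop k hk 0%N (leq0n k).
rewrite f0 fn; lia.
Qed.

Section Powers.
Variables (F : fieldType) (vT : vectType F).
Implicit Types (X : 'End(vT)) (U : {vspace vT}).

Lemma lpowSE X n v : lpow X n.+1 v = X (lpow X n v).
Proof. by rewrite /= comp_lfunE. Qed.

Lemma lpowDE X m n v : lpow X (m + n) v = lpow X m (lpow X n v).
Proof.
elim: m => [|m IH]; first by rewrite /= id_lfunE.
by rewrite addSn !lpowSE IH.
Qed.

Lemma lpowD X m n : lpow X (m + n) = (lpow X m \o lpow X n)%VF.
Proof. by apply/lfunP => v; rewrite comp_lfunE lpowDE. Qed.

Lemma img_lpowS X n U : lpow X n.+1 @: U = X @: (lpow X n @: U).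
Proof. exact: limg_comp. Qed.

Lemma limg_full_eq0 X : X @: fullv = 0 -> X = 0%R.
Proof.
move=> h; apply/lfunP => v; rewrite zero_lfunE.
by apply/eqP; rewrite -memv0 -h memv_img ?memvf.
Qed.

End Powers.

Section Nilpotent.
Variables (F : fieldType) (vT : vectType F) (d : nat).
Hypothesis hdim : \dim (fullv : {vspace vT}) = d.+1.
Variable Z : 'End(vT).
Hypothesis nilZ : NilX d Z.

(* If two consecutive images coincide, all later ones do, so [Z^d V = Z^(d+1) V = 0]. *)
Lemma dim_img_lpow k : (k <= d.+1)%N -> \dim (lpow Z k @: fullv) = (d.+1 - k)%N.
Proof.
have [Z1 Zd] := nilZ.
have decr n : lpow Z n.+1 @: fullv <= lpow Z n @: fullv.
  by rewrite -addn1 lpowD limg_comp limgS ?subvf.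
apply: (decreasing_chain_subn (f := fun k => \dim (lpow Z k @: fullv))).
- by rewrite lim1g hdim.
- by rewrite Z1 lim0g dimv0.
move=> n hn; rewrite ltn_neqAle dimvS // andbT.
apply/negP => /eqP same; apply/Zd/limg_full_eq0.
have stable : lpow Z n.+1 @: fullv = lpow Z n @: fullv.
  by apply/eqP; rewrite eqEdim decr same leqnn.
rewrite (_ : d = d - n + n)%N; last by lia.
rewrite lpowD limg_comp -stable -limg_comp -lpowD.
by rewrite (_ : d - n + n.+1 = d.+1)%N ?Z1 ?lim0g //; lia.
Qed.

Lemma dim_flag_of i : (i <= d)%N -> \dim (flag_of d Z i) = i.+1.
Proof. by move=> hi; rewrite /flag_of dim_img_lpow; lia. Qed.

End Nilpotent.

Section PartialSums.
Variables (F : fieldType) (vT : vectType F).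
Implicit Types (Vs : nat -> {vspace vT}) (W : {vspace vT}).

Definition psumv Vs i : {vspace vT} := (\sum_(j < i.+1) Vs j)%VS.

Lemma psumv0 Vs : psumv Vs 0 = Vs 0%N.
Proof. by rewrite /psumv big_ord1. Qed.

Lemma psumvS Vs i : psumv Vs i.+1 = psumv Vs i + Vs i.+1.
Proof. by rewrite /psumv big_ord_recr. Qed.

Lemma psumv_sup Vs i j : (j <= i)%N -> Vs j <= psumv Vs i.
Proof. by move=> h; rewrite /psumv (sumv_sup (Ordinal (h : (j < i.+1)%N))). Qed.

Lemma psumv_subP Vs i W :
  reflect (forall j, (j <= i)%N -> Vs j <= W) (psumv Vs i <= W).
Proof.
apply: (iffP subv_sumP) => [h j hj | h j _]; last by apply: h; rewrite -ltnS.
exact: (h (Ordinal (hj : (j < i.+1)%N))).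
Qed.

Lemma psumvS_mono Vs i i' : (i <= i')%N -> psumv Vs i <= psumv Vs i'.
Proof. by move=> h; apply/psumv_subP => j hj; apply: psumv_sup; lia. Qed.

Lemma dim_psumv_lines (f : nat -> vT) i :
  (\dim (psumv (fun j => <[f j]>) i) <= i.+1)%N.
Proof.
apply: leq_trans (dimv_leq_sum _ _ _) _.
rewrite -[X in (_ <= X)%N]card_ord -sum1_card leq_sum // => j _.
by rewrite dim_vline leq_b1.
Qed.

End PartialSums.

Section LRPairNecessary.
Variables (F : fieldType) (vT : vectType F) (d : nat).
Variables (X Y : 'End(vT)) (Vs : nat -> {vspace vT}).
Hypotheses (decV : is_decomposition d Vs) (lowX : lowers_dec d X Vs)
  (raiseY : raises_dec d Y Vs).

Lemma img_psumv_lowered i : (i < d)%N -> X @: psumv Vs i.+1 = psumv Vs i.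
Proof.
have [lowS low0] := lowX.
move=> hi; rewrite /psumv big_ord_recl limgD low0 add0v limg_sum.
by apply: eq_bigr => j _; rewrite lift0 lowS //=; have := ltn_ord j; lia.
Qed.

Lemma img_lpow_lowered k : (k <= d)%N -> lpow X k @: fullv = psumv Vs (d - k).
Proof.
have [_ [_ full]] := decV.
elim: k => [|k IH] hk; first by rewrite lim1g subn0 /psumv full.
rewrite img_lpowS IH ?(ltnW hk) // (_ : d - k = (d - k.+1).+1)%N; last by lia.
by rewrite img_psumv_lowered //; lia.
Qed.

Lemma flag_of_lowered i : (i <= d)%N -> flag_of d X i = psumv Vs i.
Proof. by move=> hi; rewrite /flag_of img_lpow_lowered ?leq_subr ?subKn. Qed.

Lemma NilX_of_lowers_dec : NilX d X.
Proof.
have [dim1 _] := decV; have [_ low0] := lowX.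
split.
  by apply: limg_full_eq0; rewrite img_lpowS img_lpow_lowered // subnn psumv0.
move=> Xd0; have := dim1 0%N isT.
by rewrite -psumv0 -(subnn d) -img_lpow_lowered // Xd0 lim0g dimv0.
Qed.

Lemma raises_flag_of_LR_dec : raises_flag d Y (flag_of d X).
Proof.
have [raiseS _] := raiseY.
move=> i hi; rewrite !flag_of_lowered ?(ltnW hi) //.
apply/eqP; rewrite eqEsubv subv_add psumvS_mono //=; apply/andP; split.
  rewrite /psumv limg_sum; apply/subv_sumP => j _.
  by rewrite raiseS ?psumv_sup //; have := ltn_ord j; lia.
apply/psumv_subP => -[|j] hj.
  by apply: subv_trans (addvSl _ _); apply: psumv_sup.
rewrite -raiseS; last by lia.
by apply: subv_trans (addvSr _ _); apply/limgS/psumv_sup.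
Qed.

End LRPairNecessary.

Lemma LR_pair_NilX_raises_flag (F : fieldType) (vT : vectType F) (d : nat)
  (X Y : 'End(vT)) :
  LR_pair d X Y -> NilX d X /\ raises_flag d Y (flag_of d X).
Proof.
move=> [Vs [decV [lowX raiseY]]].
split; first exact: NilX_of_lowers_dec decV lowX.
exact: raises_flag_of_LR_dec decV lowX raiseY.
Qed.

Section LRPairSufficient.
Variables (F : fieldType) (vT : vectType F) (d : nat).
Hypothesis hdim : \dim (fullv : {vspace vT}) = d.+1.
Variables X Y : 'End(vT).
Hypotheses (nilX : NilX d X) (nilY : NilX d Y).
Hypotheses (raiseY : raises_flag d Y (flag_of d X))
  (raiseX : raises_flag d X (flag_of d Y)).

Let U := flag_of d X.
Let u := vpick (U 0%N).
Let Vs j := <[lpow Y j u]>.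

Lemma flag_of0_pick_neq0 : u != 0%R.
Proof. by rewrite vpick0 -dimv_eq0 (dim_flag_of hdim nilX). Qed.

Lemma flag_of0_line : U 0%N = <[u]>.
Proof.
apply/eqP; rewrite eq_sym eqEdim -memvE memv_pick dim_vline flag_of0_pick_neq0.
by rewrite (dim_flag_of hdim nilX).
Qed.

Lemma flag_of_orbit i : (i <= d)%N -> U i = psumv Vs i.
Proof.
move=> hi; apply/eqP; rewrite eqEdim (dim_flag_of hdim nilX) //.
rewrite (dim_psumv_lines (fun j => lpow Y j u)) andbT.
elim: i hi => [|i IH] hi; first by rewrite psumv0 flag_of0_line /Vs /= id_lfunE.
rewrite /U -raiseY // subv_add; apply/andP; split.
  by rewrite (subv_trans (IH (ltnW hi))) ?psumvS_mono.
apply: subv_trans (limgS _ (IH (ltnW hi))) _.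
rewrite /psumv limg_sum; apply/subv_sumP => j _.
by rewrite limg_line -lpowSE (psumv_sup Vs).
Qed.

Lemma psumv_orbit_full : psumv Vs d = fullv.
Proof. by rewrite -flag_of_orbit // /U /flag_of subnn lim1g. Qed.

Lemma dim_orbit_line j : (j <= d)%N -> \dim (Vs j) = 1%N.
Proof.
move=> hj; rewrite /Vs dim_vline; have [Yj0|//] := eqVneq (lpow Y j u) 0%R.
case: j hj Yj0 => [|j] hj Yj0.
  by move: flag_of0_pick_neq0; rewrite -[u]id_lfunE Yj0 eqxx.
have := dim_flag_of hdim nilX hj; rewrite -/(U j.+1) flag_of_orbit // psumvS.
rewrite [Vs _]/Vs Yj0 addv0 => dimS.
by have := dim_psumv_lines (fun j => lpow Y j u) j; rewrite dimS ltnn.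
Qed.

Lemma orbit_direct : directv (\sum_(j < d.+1) Vs j).
Proof.
apply/directvP; rewrite /= -/(psumv Vs d) psumv_orbit_full hdim.
rewrite (eq_bigr (fun _ => 1%N)) ?sum1_card ?card_ord // => j _.
by rewrite dim_orbit_line // -ltnS.
Qed.

(* [U i] and [Y^i V] have complementary dimensions [i+1] and [d+1-i] and span [V]. *)
Lemma flag_of_cap_img i : (i <= d)%N -> U i :&: lpow Y i @: fullv = Vs i.
Proof.
move=> hi; have orbit_img j : (i <= j)%N -> Vs j <= lpow Y i @: fullv.
  move=> hij; rewrite /Vs -memvE (_ : j = i + (j - i))%N; last by lia.
  by rewrite lpowDE memv_img ?memvf.
have span : U i + lpow Y i @: fullv = fullv.
  apply/eqP; rewrite eqEsubv subvf -{1}psumv_orbit_full; apply/psumv_subP => j hj.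
  have [hji|hij] := leqP j i.
    by apply: subv_trans (addvSl _ _); rewrite flag_of_orbit ?psumv_sup.
  by apply: subv_trans (addvSr _ _); apply: orbit_img; apply: ltnW.
apply/eqP; rewrite eq_sym eqEdim subv_cap orbit_img // andbT.
rewrite {1}flag_of_orbit ?psumv_sup //=.
have := dimv_sum_cap (U i) (lpow Y i @: fullv).
rewrite span hdim (dim_flag_of hdim nilX) // (dim_img_lpow hdim nilY); last by lia.
by rewrite dim_orbit_line //; lia.
Qed.

Lemma img_flag_of i : (i < d)%N -> X @: U i.+1 = U i.
Proof. by move=> hi; rewrite /U /flag_of -img_lpowS subnSK. Qed.

Lemma dim_img_flag_of i : (i <= d)%N -> \dim (X @: U i) = i.
Proof.
move=> hi; rewrite /U /flag_of -img_lpowS (dim_img_lpow hdim nilX) ?ltnS ?leq_subr //.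
by rewrite subSS subKn.
Qed.

Lemma img_orbit_line0 : X @: Vs 0%N = 0.
Proof.
by rewrite -(psumv0 Vs) -flag_of_orbit // /U /flag_of subn0 -img_lpowS nilX.1 lim0g.
Qed.

Lemma img_orbit_line m : (m < d)%N -> X @: Vs m.+1 = Vs m.
Proof.
move=> hm; have hm' := ltnW hm; have sub : X @: Vs m.+1 <= Vs m.
  rewrite -(flag_of_cap_img hm') subv_cap; apply/andP; split.
    by rewrite -img_flag_of // limgS // flag_of_orbit // psumv_sup.
  have := raiseX (_ : (d - m.+1 < d)%N); rewrite /flag_of subnSK // !subKn //.
  move=> /(_ (leq_subr _ _)) <-; apply: subv_trans (addvSr _ _).
  by rewrite limgS // /Vs -memvE memv_img ?memvf.
apply/eqP; rewrite eqEdim sub dim_orbit_line //=.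
have := dimv_add_leqif (X @: U m) (X @: Vs m.+1).
rewrite dim_img_flag_of // -limgD (flag_of_orbit hm') -psumvS.
rewrite -flag_of_orbit // img_flag_of // (dim_flag_of hdim nilX) //.
by move=> /leq_of_leqif; lia.
Qed.

Lemma LR_pair_of_NilX_raises_flag : LR_pair d X Y.
Proof.
exists Vs; split; [split; [|split] | split; split].
- exact: dim_orbit_line.
- exact: orbit_direct.
- exact: psumv_orbit_full.
- by case=> // m /andP [_ hm]; apply: img_orbit_line.
- exact: img_orbit_line0.
- by move=> i _; rewrite /Vs limg_line lpowSE.
- by apply/eqP; rewrite -dimv_eq0 limg_line dim_vline -lpowSE nilY.1 zero_lfunE eqxx.
Qed.

End LRPairSufficient.

Theorem theorem34p3 (F : fieldType) (vT : vectType F) (d : nat)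
  (hdim : \dim (fullv : {vspace vT}) = d.+1) (A B C : 'End(vT)) :
  LR_triple d A B C <->
  [/\ NilX d A /\ NilX d B /\ NilX d C,
      raises_flag d B (flag_of d A) /\ raises_flag d C (flag_of d A),
      raises_flag d C (flag_of d B) /\ raises_flag d A (flag_of d B)
    & raises_flag d A (flag_of d C) /\ raises_flag d B (flag_of d C)].
Proof.
split.
  move=> [[/LR_pair_NilX_raises_flag[nilA rBA] /LR_pair_NilX_raises_flag[nilB rAB]]
          [[/LR_pair_NilX_raises_flag[_ rCA] /LR_pair_NilX_raises_flag[nilC rAC]]
           [/LR_pair_NilX_raises_flag[_ rCB] /LR_pair_NilX_raises_flag[_ rBC]]]].
  by split.
move=> [[nilA [nilB nilC]] [rBA rCA] [rCB rAB] [rAC rBC]].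
by split; [split | split; split]; apply: LR_pair_of_NilX_raises_flag.
Qed.
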